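(* Let $\phi(x,y)=\lambda(x,y)\alpha(x,y)-\beta(x,y)$ be the Riley polynomial of $K_2=K(17,7)$ (the case $l=2$). Then for every $n\geq 5$, $\phi(2\cos(\pi/n),y)$ has a real root $y_n>2$.
   Context: $\lambda(x,y)=9x^2-12x^4+4x^6-5y+10x^2y+2x^4y-4x^6y-11x^2y^2+8x^4y^2+x^6y^2+5y^3-4x^2y^3-3x^4y^3+3x^2y^4-y^5$, $\alpha(x,y)=1-4x^2+2x^4+2y-x^2y-x^4y-y^2+2x^2y^2-y^3$, $\beta(x,y)=-1+x^2-y$. $K(p,q)$ is the two-bridge knot with fraction $p/q$. *)

From Stdlib Require Import Reals.
Open Scope R_scope.

Definition lambda_K (x y : R) : R :=
  9*x^2 - 12*x^4 + 4*x^6 - 5*y + 10*x^2*y + 2*x^4*y - 4*x^6*y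
  - 11*x^2*y^2 + 8*x^4*y^2 + x^6*y^2 + 5*y^3 - 4*x^2*y^3
  - 3*x^4*y^3 + 3*x^2*y^4 - y^5.

Definition alpha_K (x y : R) : R :=
  1 - 4*x^2 + 2*x^4 + 2*y - x^2*y - x^4*y - y^2 + 2*x^2*y^2 - y^3.

Definition beta_K (x y : R) : R := -1 + x^2 - y.

Definition phi_K (x y : R) : R := lambda_K x y * alpha_K x y - beta_K x y.

(** For [x = 2 cos (PI/n)] and [n >= 5] we have [12/5 <= x^2 <= 4], and [phi_K x]
    changes sign on [(2, 10]]: it is positive at [y = 10], while it is negative
    at [y = 2] when [x^2 <= 3] and at the zero [y = x^2 - 1 > 2] of [beta_K]
    when [x^2 > 3] (there [lambda_K * alpha_K = -1] identically).  The
    intermediate value theorem then gives the root. *)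

From Stdlib Require Import Reals Lra Psatz.
Open Scope R_scope.

(** Since [sin (PI/6) = 1/2] and [sin a >= a - a^3/6]. *)
Lemma PI_le_33_10 : PI <= 33/10.
Proof.
  pose proof PI_RGT_0 as HPI; pose proof PI_4 as HPI4.
  destruct (sin_bound (PI/6) 0) as [Hsin _]; try lra.
  rewrite sin_PI6 in Hsin.
  unfold sin_approx, sin_term in Hsin; simpl in Hsin.
  set (p := PI) in *.
  assert (p / 6 * (p / 6) * (p / 6) <= 64/216) by (unfold Rdiv; nra).
  nra.
Qed.

Lemma cos_ge_1_sub_sqr_half (a : R) :
  - (PI/2) <= a <= PI/2 -> 1 - a^2/2 <= cos a.
Proof.
  intros Ha.
  destruct (cos_bound a 0) as [Hcos _]; try lra.
  unfold cos_approx, cos_term in Hcos; simpl in Hcos.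
  lra.
Qed.

Lemma cos_PI_div_ge (n : nat) : (5 <= n)%nat -> 39/50 <= cos (PI / INR n).
Proof.
  intros Hn.
  pose proof PI_RGT_0 as HPI; pose proof PI_le_33_10 as HPI33; pose proof PI2_1 as HPI2.
  assert (Hn5 : 5 <= INR n) by (apply (le_INR 5) in Hn; simpl in Hn; lra).
  set (a := PI / INR n).
  assert (Ha0 : 0 < a) by (apply Rdiv_lt_0_compat; lra).
  assert (Ha : a <= 33/50).
  { apply (Rmult_le_reg_r (INR n)); [lra|].
    unfold a, Rdiv; rewrite Rmult_assoc, Rinv_l by lra; nra. }
  assert (Hcos := cos_ge_1_sub_sqr_half a ltac:(lra)).
  nra.
Qed.

Lemma phi_K_continuous (x : R) : continuity (phi_K x).
Proof. unfold phi_K, lambda_K, alpha_K, beta_K; reg. Qed.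

Lemma phi_K_at_10_pos (x : R) : 0 <= x^2 <= 4 -> 0 < phi_K x 10.
Proof.
  intros Hx.
  assert (Hlambda : lambda_K x 10
                    = -95050 + 25009 * x^2 - 2192 * (x^2)^2 + 64 * (x^2)^3)
    by (unfold lambda_K; ring).
  assert (Halpha : alpha_K x 10 = -1079 + 186 * x^2 - 8 * (x^2)^2)
    by (unfold alpha_K; ring).
  set (t := x^2) in *.
  assert (lambda_K x 10 < 0) by (rewrite Hlambda; nra).
  assert (alpha_K x 10 < 0) by (rewrite Halpha; nra).
  unfold phi_K, beta_K; fold t; nra.
Qed.

Lemma phi_K_at_2 (x : R) : phi_K x 2 = 2 * (x^2)^2 - 12 * x^2 + 17.
Proof. unfold phi_K, lambda_K, alpha_K, beta_K; ring. Qed.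

Lemma phi_K_at_beta_root (x : R) : phi_K x (x^2 - 1) = -1.
Proof. unfold phi_K, lambda_K, alpha_K, beta_K; ring. Qed.

Lemma phi_K_neg_between_2_10 (x : R) :
  12/5 <= x^2 <= 4 -> exists y0, 2 <= y0 < 10 /\ phi_K x y0 < 0.
Proof.
  intros Hx.
  destruct (Rle_lt_dec (x^2) 3) as [Hle | Hgt].
  - exists 2; split; [lra|].
    rewrite phi_K_at_2; nra.
  - exists (x^2 - 1); split; [lra|].
    rewrite phi_K_at_beta_root; lra.
Qed.

Lemma phi_K_root_gt_2 (x : R) :
  12/5 <= x^2 <= 4 -> exists y, y > 2 /\ phi_K x y = 0.
Proof.
  intros Hx.
  destruct (phi_K_neg_between_2_10 x Hx) as [y0 [Hy0 Hneg]].
  pose proof (phi_K_at_10_pos x ltac:(lra)) as Hpos.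
  destruct (IVT (phi_K x) y0 10 (phi_K_continuous x)) as [y [Hy Hroot]];
    try lra.
  exists y; split; [|exact Hroot].
  destruct (Req_dec y y0) as [-> | Hne]; lra.
Qed.

Theorem proposition6p10 :
  forall n : nat, (5 <= n)%nat ->
    exists y : R, y > 2 /\ phi_K (2 * cos (PI / INR n)) y = 0.
Proof.
  intros n Hn.
  apply phi_K_root_gt_2.
  pose proof (cos_PI_div_ge n Hn) as Hlow.
  pose proof (COS_bound (PI / INR n)) as Hup.
  nra.
Qed.
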